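(* Let $G$ be an $n$-node graph of arboricity at most $a$ ($a\ge1$ an integer), let $k\ge 5a$, and let $C_1,C_2,\dots$ be the layers of the Decomposition procedure with parameters $b=2a$ and $k$. Let $E_1$ be the set of atypical edges. Suppose each node $u$ assigns to each edge of $E_1$ joining $u$ to a higher node a color in $\{1,\dots,2a\}$, distinct edges at $u$ receiving distinct colors (this is possible), and let $F_i\subseteq E_1$ be the set of edges with color $i$. Then for each $i\in\{1,\dots,2a\}$, the graph $G[F_i]$ is a forest in which every node has at most one higher neighbor. Moreover, if $c_i$ is any proper $3$-coloring of the nodes of $G[F_i]$ and $F_{i,j}=\{e\in F_i: c_i(\text{higher endpoint of } e)=j\}$ for $j\in\{1,2,3\}$, then every connected component of $G[F_{i,j}]$ is a star whose center is the highest node of the component.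
   Context: Decomposition procedure with parameters $b,k$ on a graph $G$: set $V_0=V(G)$; for $i=1,2,\dots$: let $C_i$ be the set of nodes $u\in V_{i-1}$ with $\deg_{G[V_{i-1}]}(u)\le k$ such that at most $b$ neighbors of $u$ in $G[V_{i-1}]$ have degree greater than $k$ in $G[V_{i-1}]$; set $V_i=V_{i-1}\setminus C_i$; continue until all nodes are in some layer. Node $u$ is lower than node $v$ (and $v$ higher than $u$) if $u$'s layer index is smaller, or they are in the same layer and $u$ has smaller ID; the higher endpoint of an edge is its higher node. An edge $e=\{u,v\}$ with $u\in C_i$, $v\in C_j$, $i<j$ is atypical if $\deg_{G[V_{i-1}]}(v)>k$; $E_1$ is the set of atypical edges. $G[F]$ denotes the graph with edge set $F$ and vertex set the endpoints of edges in $F$. *)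

(* Graphs on vertex set 'I_n; the node ID of u is (val u). *)
From mathcomp Require Import all_boot.
From Stdlib Require Import Relations.Relation_Operators.
Set Implicit Arguments. Unset Strict Implicit. Unset Printing Implicit Defensive.

Definition forest (T : finType) (R : T -> T -> Prop) : Prop :=
  forall (m : nat) (c : 'I_m.+3 -> T), injective c ->
    ~ (forall i : 'I_m.+3, R (c i) (c (ordS i))).

Definition arboricity_le n (adj : rel 'I_n) (a : nat) : Prop :=
  exists f : 'I_n -> 'I_n -> 'I_a,
    (forall u v, f u v = f v u) /\
    forall t : 'I_a, forest (fun x y => adj x y /\ f x y = t).

Definition deg_in n (adj : rel 'I_n) (S : {set 'I_n}) (u : 'I_n) : nat :=
  #|[set v in S | adj u v]|.

Definition peel n (adj : rel 'I_n) (b k : nat) (S : {set 'I_n}) : {set 'I_n} :=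
  [set u in S | (deg_in adj S u <= k) &&
     (#|[set v in S | adj u v & k < deg_in adj S v]| <= b)].

Definition Vset n (adj : rel 'I_n) (b k i : nat) : {set 'I_n} :=
  iter i (fun S => S :\: peel adj b k S) [set: 'I_n].

(* C_i (i >= 1); C_0 is empty by convention (layers are indexed from 1) *)
Definition layer n (adj : rel 'I_n) (b k i : nat) : {set 'I_n} :=
  if i is i'.+1 then peel adj b k (Vset adj b k i') else set0.

Definition lower n (adj : rel 'I_n) (b k : nat) (u v : 'I_n) : Prop :=
  exists i j, u \in layer adj b k i /\ v \in layer adj b k j /\
    (i < j \/ (i = j /\ val u < val v)).

Definition atypical n (adj : rel 'I_n) (b k : nat) (u v : 'I_n) : Prop :=
  adj u v /\ exists i j, i < j /\ u \in layer adj b k i /\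
    v \in layer adj b k j /\ k < deg_in adj (Vset adj b k i.-1) v.

(* col u v : color given by u to the edge {u,v} of E_1 going up from u;
   distinct upward E_1-edges at u get distinct colors. *)
Definition good_coloring n (adj : rel 'I_n) (b k : nat) (q : nat)
    (col : 'I_n -> 'I_n -> 'I_q) : Prop :=
  forall u v w, atypical adj b k u v -> atypical adj b k u w ->
    col u v = col u w -> v = w.

(* F_t as a directed relation (lower endpoint first) *)
Definition Fcls n (adj : rel 'I_n) (b k q : nat) (col : 'I_n -> 'I_n -> 'I_q)
    (t : 'I_q) (u v : 'I_n) : Prop :=
  atypical adj b k u v /\ col u v = t.

Definition undirected (T : Type) (R : T -> T -> Prop) (x y : T) : Prop :=
  R x y \/ R y x.

(* Every connected component of the graph (edge relation R, vertices = endpoints)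
   is a star whose center z is the highest node of the component. *)
Definition star_components (T : Type) (R : T -> T -> Prop)
    (low : T -> T -> Prop) : Prop :=
  forall x, (exists y, R x y) ->
    exists z, @clos_refl_trans T R x z /\
      (forall y w, @clos_refl_trans T R x y -> R y w -> y = z \/ w = z) /\
      (forall y, @clos_refl_trans T R x y -> y <> z -> low y z).

(* Every node u of a layer C_i has at most b = 2a atypical edges to higher nodes:
   their higher endpoints are neighbors of u in G[V_{i-1}] of degree > k there,
   and u was peeled off only because there are at most b of them.  Hence a good
   coloring exists, and in each color class F_t every node has at most one
   higher neighbor, reached by an edge that strictly increases the layer index.
   A cycle would then have to leave its lowest node along two distinct upward
   edges, so G[F_t] is a forest.  For a proper coloring c, an edge of F_{t,j}
   ends in a node colored j, whose own upward edge ends in a node not colored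
   j; so every edge of G[F_{t,j}] points to a center colored j, and each
   component consists of one such center together with nodes pointing to it. *)
From Stdlib Require Import ClassicalDescription.
From Stdlib Require Import Relations.Relation_Operators Relations.Operators_Properties.
From mathcomp Require Import all_boot zify.
Set Implicit Arguments. Unset Strict Implicit. Unset Printing Implicit Defensive.

Definition functional_rel (T : Type) (R : T -> T -> Prop) : Prop :=
  forall u v w, R u v -> R u w -> v = w.

Lemma ordS_neq_ord_pred m (p : 'I_m.+3) : ordS p != ord_pred p.
Proof.
apply/eqP => /(congr1 (@ordS _)); rewrite ord_predK => /(congr1 val) /=.
rewrite -!addn1 modnDml -addnA -[RHS](modn_small (ltn_ord p)) -[in RHS](addn0 p).
by move/eqP; rewrite eqn_modDl !modn_small.
Qed.

Lemma exists_out_coloring (T : finType) (R : T -> T -> Prop) q : 0 < q ->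
  (forall u, exists2 s : seq T, size s <= q & forall v, R u v -> v \in s) ->
  exists col : T -> T -> 'I_q,
    forall u v w, R u v -> R u w -> col u v = col u w -> v = w.
Proof.
move=> q_gt0 /fin_all_exists2[s size_s Rs].
exists (fun u v => insubd (Ordinal q_gt0) (index v (s u))) => u v w Ruv Ruw.
have index_lt x : R u x -> index x (s u) < q.
  by move=> /Rs x_s; apply: leq_trans (size_s u); rewrite index_mem.
move=> /(congr1 val); rewrite !val_insubd !index_lt // => eq_index.
by rewrite -(nth_index v (Rs _ _ Ruv)) eq_index nth_index // Rs.
Qed.

Lemma forest_undirected_graded (T : finType) (R : T -> T -> Prop) (rank : T -> nat) :
  functional_rel R -> (forall u v, R u v -> rank u < rank v) -> forest (undirected R).
Proof.
move=> R_functional R_rank m c c_inj c_cycle.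
pose p := [arg min_(i < ord0) rank (c i)].
have p_min i : rank (c p) <= rank (c i) by rewrite /p; case: arg_minnP => // i0 _; apply.
have up_from_p i : undirected R (c p) (c i) -> R (c p) (c i).
  by case=> // /R_rank; rewrite ltnNge p_min.
have R_next := up_from_p _ (c_cycle p).
have R_prev : R (c p) (c (ord_pred p)).
  by apply: up_from_p; case: (c_cycle (ord_pred p)); rewrite ord_predK; [right|left].
by have := ordS_neq_ord_pred p; rewrite (c_inj _ _ (R_functional _ _ _ R_next R_prev)) eqxx.
Qed.

Section FunctionalRelation.

Variables (T : Type) (R : T -> T -> Prop).
Hypothesis R_functional : functional_rel R.

Lemma undirected_forward (low : T -> T -> Prop) x y :
  (forall u v, R u v -> ~ low v u) -> undirected R x y -> low x y -> R x y.
Proof. by move=> R_up [//|Ryx] /(R_up _ _ Ryx). Qed.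

Lemma higher_neighbor_uniq (low : T -> T -> Prop) :
  (forall u v, R u v -> ~ low v u) ->
  forall x y z, undirected R x y -> undirected R x z -> low x y -> low x z -> y = z.
Proof.
move=> R_up x y z Rxy Rxz lxy lxz.
exact: R_functional (undirected_forward R_up Rxy lxy) (undirected_forward R_up Rxz lxz).
Qed.

Variables (C : Type) (c : T -> C) (j : C).
Hypothesis c_proper : forall x y, undirected R x y -> c x <> c y.

Let S u v := R u v /\ c v = j.

Lemma color_class_step z y w : c z = j -> (y = z \/ S y z) -> undirected S y w ->
  (w = z \/ S w z) /\ (y = z \/ w = z).
Proof.
move=> cz [->|[Ryz cyz]] [[Ryw cw]|[Rwy cy]].
- by case: (c_proper (or_introl Ryw)); rewrite cz cw.
- by split; [right|left].
- by rewrite (R_functional Ryw Ryz); split; [left|right].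
- by case: (c_proper (or_introl Ryz)); rewrite cz cy.
Qed.

Lemma color_class_reach z w : c z = j ->
  clos_refl_trans _ (undirected S) z w -> w = z \/ S w z.
Proof.
move=> cz /clos_rt_rtn1_iff; elim=> [|y {}w Syw _ IH]; first by left.
exact: (color_class_step cz IH Syw).1.
Qed.

Section Stars.

Variable low : T -> T -> Prop.
Hypothesis R_low : forall u v, R u v -> low u v.

Lemma color_class_star_at x z : c z = j ->
  clos_refl_trans _ (undirected S) x z -> clos_refl_trans _ (undirected S) z x ->
  exists z, clos_refl_trans _ (undirected S) x z /\
    (forall y w, clos_refl_trans _ (undirected S) x y -> undirected S y w ->
       y = z \/ w = z) /\
    (forall y, clos_refl_trans _ (undirected S) x y -> y <> z -> low y z).
Proof.
move=> cz xz zx; exists z.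
have zy y : clos_refl_trans _ (undirected S) x y -> y = z \/ S y z.
  by move=> xy; apply: color_class_reach cz (rt_trans _ _ _ _ _ zx xy).
split; [done | split=> [y w xy Syw | y xy yz]].
- exact: (color_class_step cz (zy y xy) Syw).2.
- by case: (zy y xy) => // -[/R_low].
Qed.

Lemma star_components_color_class : star_components (undirected S) low.
Proof.
move=> x [y Sxy]; have [cx|cx] := classic (c x = j).
  exact: color_class_star_at cx (rt_refl _ _ x) (rt_refl _ _ x).
case: Sxy => [Sxy|[_ //]].
exact: color_class_star_at Sxy.2 (rt_step _ _ _ _ (or_introl Sxy))
  (rt_step _ _ _ _ (or_intror Sxy)).
Qed.

End Stars.

End FunctionalRelation.

Section Decomposition.

Variables (n : nat) (adj : rel 'I_n) (b k : nat).

Lemma Vset_mono i j : i <= j -> Vset adj b k j \subset Vset adj b k i.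
Proof.
move=> /subnK <-; elim: (j - i) => [|d IH] /=; first exact: subxx.
by apply: subset_trans IH; apply: subsetDl.
Qed.

Lemma layerS_Vset x i : x \in layer adj b k i.+1 -> x \in Vset adj b k i.
Proof. by rewrite inE => /andP[]. Qed.

Lemma layerS_notin_VsetS x i : x \in layer adj b k i.+1 -> x \notin Vset adj b k i.+1.
Proof. by move=> x_layer; rewrite /= inE x_layer. Qed.

Lemma layer_uniq x i j : x \in layer adj b k i -> x \in layer adj b k j -> i = j.
Proof.
wlog lt_ij : i j / i < j => [wlog_lt|].
  by move=> xi xj; case: (ltngtP i j) => // lt; [|apply/esym]; apply: wlog_lt lt _ _.
case: i j lt_ij => [|i] [|j] // lt_ij xi xj; first by rewrite inE in xi.
rewrite ltnS in lt_ij; have := layerS_notin_VsetS xi.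
by rewrite (subsetP (Vset_mono lt_ij) _ (layerS_Vset xj)).
Qed.

Definition layer_index (u : 'I_n) : nat :=
  match excluded_middle_informative (exists i, u \in layer adj b k i) with
  | left u_layered => ex_minn u_layered
  | right _ => 0
  end.

Lemma layer_indexP u i : u \in layer adj b k i -> layer_index u = i.
Proof.
move=> u_i; rewrite /layer_index; case: excluded_middle_informative => [ex|[]].
- by case: ex_minnP => l u_l _; apply: layer_uniq u_l u_i.
- by exists i.
Qed.

Lemma atypical_layer_index_lt u v : atypical adj b k u v -> layer_index u < layer_index v.
Proof. by case=> _ [i [j [lt_ij [/layer_indexP-> [/layer_indexP-> _]]]]]. Qed.

Lemma atypical_lower u v : atypical adj b k u v -> lower adj b k u v.
Proof. by case=> _ [i [j [lt_ij [ui [vj _]]]]]; exists i, j; do 2!split=> //; left. Qed.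

Lemma atypical_not_lower u v : atypical adj b k u v -> ~ lower adj b k v u.
Proof.
move=> /atypical_layer_index_lt lt_uv [i [j [/layer_indexP vi [/layer_indexP uj]]]].
by rewrite -vi -uj; case=> [|[]]; lia.
Qed.

Lemma atypical_out_bound u :
  exists2 s : seq 'I_n, size s <= b & forall v, atypical adj b k u v -> v \in s.
Proof.
have [[v [_ [i [_ [_ [ui _]]]]]]|no_up] := classic (exists v, atypical adj b k u v);
  last by exists [::] => // v Auv; case: no_up; exists v.
case: i ui => [|i] ui; first by rewrite inE in ui.
set W := Vset adj b k i.
exists (enum [set w in W | adj u w & k < deg_in adj W w]).
  by rewrite -cardE; move: ui; rewrite inE => /and3P[].
move=> w [adj_uw [i' [j [lt_ij [ui' [wj deg_w]]]]]].
move: lt_ij deg_w; rewrite -(layer_uniq ui ui') /= => lt_ij deg_w.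
case: j wj lt_ij => // j wj; rewrite ltnS => /ltnW lt_ij.
by rewrite mem_enum !inE adj_uw deg_w (subsetP (Vset_mono lt_ij) _ (layerS_Vset wj)).
Qed.

Lemma Fcls_functional q (col : 'I_n -> 'I_n -> 'I_q) t :
  good_coloring adj b k col -> functional_rel (Fcls adj b k col t).
Proof.
by move=> col_good u v w [Auv cv] [Auw cw]; apply: col_good Auv Auw _; rewrite cv cw.
Qed.

End Decomposition.

Theorem mainTheorem8 (n a k : nat) (adj : rel 'I_n) :
  symmetric adj -> irreflexive adj -> 1 <= a ->
  arboricity_le adj a -> 5 * a <= k ->
  (exists col : 'I_n -> 'I_n -> 'I_(2 * a), good_coloring adj (2 * a) k col) /\
  (forall col : 'I_n -> 'I_n -> 'I_(2 * a), good_coloring adj (2 * a) k col ->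
   forall t : 'I_(2 * a),
     forest (undirected (Fcls adj (2 * a) k col t)) /\
     (forall x y z, undirected (Fcls adj (2 * a) k col t) x y ->
        undirected (Fcls adj (2 * a) k col t) x z ->
        lower adj (2 * a) k x y -> lower adj (2 * a) k x z -> y = z) /\
     (forall c : 'I_n -> 'I_3,
        (forall x y, undirected (Fcls adj (2 * a) k col t) x y -> c x <> c y) ->
        forall j : 'I_3,
          star_components
            (undirected (fun u v => Fcls adj (2 * a) k col t u v /\ c v = j))
            (lower adj (2 * a) k))).
Proof.
move=> _ _ a_gt0 _ _; split.
  by apply: exists_out_coloring; [lia | exact: atypical_out_bound].
move=> col col_good t.
have Ft_functional : functional_rel (Fcls adj (2 * a) k col t).
  exact: Fcls_functional col_good.
split; last split.
- have F_rank u v : Fcls adj (2 * a) k col t u v ->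
      layer_index adj (2 * a) k u < layer_index adj (2 * a) k v.
    by move=> Fuv; apply: atypical_layer_index_lt Fuv.1.
  exact: (forest_undirected_graded Ft_functional F_rank).
- have F_up u v : Fcls adj (2 * a) k col t u v -> ~ lower adj (2 * a) k v u.
    by move=> Fuv; apply: atypical_not_lower Fuv.1.
  exact: (higher_neighbor_uniq Ft_functional F_up).
- move=> c c_proper j.
  have F_lower u v : Fcls adj (2 * a) k col t u v -> lower adj (2 * a) k u v.
    by move=> Fuv; apply: atypical_lower Fuv.1.
  exact: (star_components_color_class Ft_functional c_proper F_lower).
Qed.
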